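(* Let $r\ge0$ be an integer and let $(W,g)$ be a cubic space of dimension at most $\aleph_0$ with $\mathrm{rrk}(W)\le r$. Then $W$ embeds into the cubic space $V(r)$.
   Context: $k$ is algebraically closed of characteristic different from $2,3$. For $V$ with basis $\{v_i\}_{i\in I}$, the dual functionals $x_i$ are called coordinates; $P_n(V)$ is the space of formal, possibly infinite, $k$-linear combinations of degree-$n$ monomials in the $x_i$. A cubic space is $(V,f)$ with $f\in P_3(V)$; an embedding $(W,g)\to(V,f)$ is a $k$-linear map $\phi:W\to V$ with $f\circ\phi=g$. The strength of a homogeneous $h\in P_n(V)$, $n\ge1$, is the least $s$ with $h=\sum_{i=1}^s a_ib_i$, $a_i,b_i$ homogeneous of positive degree less than $n$ ($\infty$ if none). $\overline{P}_2(V)$ is $P_2(V)$ modulo the subspace of finite-strength quadratic forms; the residual rank $\mathrm{rrk}(f)\in\mathbf{N}\cup\{\infty\}$ is the dimension of the span in $\overline{P}_2(V)$ of the images of the formal partial derivatives $\partial f/\partial x_i$, and $\mathrm{rrk}(V,f)=\mathrm{rrk}(f)$. The cubic space $V(r)$ has coordinates $\{x_i\}_{1\le i\le r}\cup\{y_{i,j}\}_{1\le i\le r,\,j\ge1}\cup\{z_i\}_{i\ge1}$ and form $f_r=3\sum_{i=1}^rx_iq_i+\sum_{i\ge1}z_i^3$, where $q_i=\sum_{j\ge1}y_{i,j}^2$. *)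

From HB Require Import structures.
From mathcomp Require Import all_boot all_order all_algebra.
From mathcomp Require Import finmap multiset.
Set Implicit Arguments. Unset Strict Implicit. Unset Printing Implicit Defensive.
Import Order.TTheory GRing.Theory.
Local Open Scope ring_scope.

Section Forms.
Variable k : fieldType.
Variable I : choiceType.

(* A formal (possibly infinite) k-linear combination
   of monomials is a coefficient function on monomials. *)
Definition monomial := multiset I.
Definition fseries := monomial -> k.

Definition homog (n : nat) (F : fseries) : Prop :=
  forall m : monomial, size (enum_mset m) <> n -> F m = 0.

Definition msplits (m : monomial) : seq (monomial * monomial) :=
  undup [seq (seq_mset (mask (val bs) (enum_mset m)),
              seq_mset (mask (map negb (val bs)) (enum_mset m)))
        | bs <- enum {: (size (enum_mset m)).-tuple bool}].

Definition fmul (a b : fseries) : fseries :=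
  fun m => \sum_(p <- msplits m) a p.1 * b p.2.

Definition fderiv (F : fseries) (i : I) : fseries :=
  fun m => ((m i).+1)%:R * F (msetD (msetn 1 i) m).

Definition strength_le (n : nat) (h : fseries) (s : nat) : Prop :=
  exists (a b : 'I_s -> fseries) (da db : 'I_s -> nat),
    (forall t, [/\ (0 < da t < n)%N, (0 < db t < n)%N, (da t + db t)%N = n,
                   homog (da t) (a t) & homog (db t) (b t)]) /\
    h = (fun m => \sum_(t < s) fmul (a t) (b t) m).

Definition finite_strength (n : nat) (h : fseries) : Prop :=
  exists s, strength_le n h s.

(* rrk(f) <= r: the span of the images of the partial derivatives in
   Pbar_2 = P_2 / (finite-strength quadratic forms) has dimension <= r, i.e.
   it is contained in the span of (the images of) r quadratic forms. *)
Definition rrk_le (f : fseries) (r : nat) : Prop :=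
  exists Q : 'I_r -> fseries, (forall t, homog 2 (Q t)) /\
    forall i : I, exists c : 'I_r -> k,
      finite_strength 2 (fun m => fderiv f i m - \sum_(t < r) c t * Q t m).

Definition vect := {fsfun I -> k with 0}.

Definition monos (n : nat) (S : {fset I}) : seq monomial :=
  undup [seq seq_mset (map val (val t)) | t <- enum {: n.-tuple S}].

Definition feval (n : nat) (F : fseries) (v : vect) : k :=
  \sum_(m <- monos n (finsupp v)) F m * \prod_(i <- enum_mset m) v i.

End Forms.

Definition linmap (k : fieldType) (J I : choiceType)
    (phi : J -> vect k I) (w : vect k J) : vect k I :=
  [fsfun i in (\bigcup_(j <- finsupp w) finsupp (phi j))%fset
     => \sum_(j <- finsupp w) w j * phi j i].

Definition cubic_embeds (k : fieldType) (J I : choiceType)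
    (g : fseries k J) (f : fseries k I) : Prop :=
  exists phi : J -> vect k I, forall w : vect k J,
    feval 3 f (linmap phi w) = feval 3 g w.

(* The cubic space V(r).  Coordinate index type:
   inl (inl i)        ~ x_{i+1}      (i < r)
   inl (inr (i, j))   ~ y_{i+1,j+1}  (i < r, j : nat)
   inr n              ~ z_{n+1}      (n : nat) *)
Definition Vidx (r : nat) : choiceType := (('I_r + ('I_r * nat)) + nat)%type.

Definition isY (r : nat) (i : 'I_r) (a : Vidx r) : bool :=
  if a is inl (inr (i', _)) then i' == i else false.
Definition isZ (r : nat) (a : Vidx r) : bool :=
  if a is inr _ then true else false.

(* f_r = 3 sum_i x_i q_i + sum_n z_n^3, q_i = sum_j y_{i,j}^2:
   coefficient 3 on x_i y_{i,j}^2, coefficient 1 on z_n^3, 0 elsewhere. *)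
Definition f_V (k : fieldType) (r : nat) : fseries k (Vidx r) :=
  fun m =>
    (\sum_(i < r) \sum_(a <- finsupp m)
        (if isY i a && (m == msetD (msetn 1 (inl (inl i) : Vidx r)) (msetn 2 a))
         then 3%:R else 0))
    + \sum_(a <- finsupp m)
        (if isZ a && (m == msetn 3 a) then 1 else 0).
Arguments f_V k r : clear implicits.

From HB Require Import structures.
From mathcomp Require Import all_boot all_order all_algebra.
From mathcomp Require Import finmap multiset ring.
From Stdlib Require Import ClassicalEpsilon.
Set Implicit Arguments. Unset Strict Implicit. Unset Printing Implicit Defensive.
Import GRing.Theory.
Local Open Scope ring_scope.

(* Order the basis (w_x) of W by pickling and write c_x for the coordinates of a vector.  Grouping
   the monomials of g by their least variable x and inserting the rank hypothesis
   d_x g = sum_t C_{x,t} Q_t + sum_i a_{x,i} b_{x,i} (with a, b linear) gives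
     g(c) = sum_t (sum_x C_{x,t} c_x) Q_t(c) + sum_x c_x G_x(c),
   where each G_x is a finite sum of products of two linear forms in the c_p with p >= x; the
   same triangular expansion writes each Q_t as sum_x c_x l_{t,x}(c).  Over k, with 2 and 3
   invertible, a product of two linear forms is a sum of two squares and a product of three is a
   sum of four cubes.  So g = f_r o phi for the linear map phi sending w_p to C_{p,t}/3 on x_t,
   and to the coefficients of c_p in these squares and cubes on the y_{t,j} and the z_j; only
   the finitely many x <= p involve c_p, so phi(w_p) is a finite vector. *)

Lemma eq_big_nz_uniq (R : nmodType) (T : eqType) (s1 s2 : seq T) (F : T -> R) :
  uniq s1 -> uniq s2 -> (forall x, F x != 0 -> (x \in s1) = (x \in s2)) ->
  \sum_(x <- s1) F x = \sum_(x <- s2) F x.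
Proof.
move=> u1 u2 H; rewrite [LHS](bigID (fun x => F x != 0)) [RHS](bigID (fun x => F x != 0)) /=.
have nz0 s : \sum_(x <- s | ~~ (F x != 0)) F x = 0 by apply: big1 => x /negPn/eqP.
rewrite !nz0 !addr0 -[LHS]big_filter -[RHS]big_filter.
apply/perm_big/uniq_perm; rewrite ?filter_uniq //.
by move=> x; rewrite !mem_filter; case: (boolP (F x != 0)) => //= /H.
Qed.

Lemma sum_pick_uniq (R : nmodType) (T : eqType) (s : seq T) x (F : T -> R) :
  uniq s -> x \in s -> \sum_(y <- s) (if y == x then F y else 0) = F x.
Proof.
by move=> us xs; rewrite (bigD1_seq x) //= eqxx big1 ?addr0 // => y /negPf ->.
Qed.

Section Monomials.
Variable I : choiceType.
Implicit Types (A B m : multiset I) (S : {fset I}).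

Lemma perm_msetD A B : perm_eq (msetD A B) (A ++ B).
Proof. by apply/allP => a _ /=; rewrite count_cat !count_mem_mset msetE2. Qed.

Lemma size_msetD A B : size (msetD A B) = (size A + size B)%N.
Proof. by rewrite (perm_size (perm_msetD A B)) size_cat. Qed.

Lemma size_msetn n (a : I) : size (msetn n a) = n.
Proof. by rewrite enum_msetn size_nseq. Qed.

Lemma msetnD p q (a : I) : msetD (msetn p a) (msetn q a) = msetn (p + q) a.
Proof. by apply/msetP => b; rewrite msetE2 !msetnE; case: eqP. Qed.

Lemma mem_monos n S m :
  (m \in monos n S) = (size m == n) && all (fun x => x \in S) m.
Proof.
rewrite /monos mem_undup; apply/mapP/idP => [[t _ ->]|/andP[/eqP sz /allP mS]].
  rewrite (perm_size (perm_eq_seq_mset _)) size_map size_tuple eqxx /=.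
  apply/allP => x; rewrite (perm_mem (perm_eq_seq_mset _)) => /mapP[y _ ->]; exact: valP.
have pm : map val (pmap (insub : I -> option S) m) = m.
  rewrite pmap_filter; last exact: insubK.
  by apply/all_filterP/allP => x /mS /=; rewrite isSome_insub.
have szp : size (pmap (insub : I -> option S) m) == n by rewrite -(size_map val) pm sz.
by exists (Tuple szp); rewrite ?mem_enum //= pm seq_mset_id.
Qed.

Lemma big_monos_fsetU1 (R : nmodType) n S x (H : multiset I -> R) : x \notin S ->
  \sum_(m <- monos n (x |` S)%fset) H m =
  \sum_(p < n.+1) \sum_(m <- monos (n - p) S) H (msetD (msetn p x) m).
Proof.
move=> xS.
rewrite -(big_mkord xpredT (fun p => \sum_(m <- monos (n - p) S) H (msetD (msetn p x) m))).
rewrite /index_iota subn0 -(big_allpairs_dep (h := fun p m => msetD (msetn p x) m)).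
have xm p m : m \in monos (n - p) S -> msetD (msetn p x) m x = p.
  rewrite mem_monos => /andP[_ /allP mS]; rewrite msetE2 msetnxx.
  apply/eqP; rewrite -[X in _ == X]addn0 eqn_add2l.
  by apply/eqP/mset_eq0P/negP => /mS; apply/negP.
apply/perm_big/uniq_perm; first exact: undup_uniq.
  apply: allpairs_uniq_dep => [|p _|[p1 m1] [p2 m2]]; [exact: iota_uniq | exact: undup_uniq |].
  move=> /allpairsPdep[q1 [l1 [_ l1m ->]]] /allpairsPdep[q2 [l2 [_ l2m ->]]] /= eqM.
  have eq_q : q1 = q2 by rewrite -(xm _ _ l1m) -(xm _ _ l2m) eqM.
  by subst q2; congr Tagged; exact: (can_inj (msetDKB (msetn q1 x)) eqM).
move=> M; apply/idP/allpairsPdep => [|[p [m [+ + ->]]]]; last first.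
  rewrite mem_iota add0n ltnS => pn; rewrite !mem_monos size_msetD size_msetn.
  case/andP => /eqP -> /allP mS; rewrite subnKC // eqxx /=; apply/allP => y.
  rewrite (perm_mem (perm_msetD _ _)) mem_cat enum_msetn mem_nseq /= in_fset1U.
  by case/orP => [/andP[_ ->] //|/mS ->]; rewrite orbT.
rewrite mem_monos => /andP[/eqP szM /allP MS].
have sub : msubset (msetn (M x) x) M.
  by apply/msubsetP => y; rewrite msetnE; case: eqP => // ->.
have eM := msetBDKC sub; set m := msetB M _ in eM.
have szm : size (enum_mset M) = (M x + size m)%N by rewrite -{1}eM size_msetD size_msetn.
exists (M x), m; split => //.
  by rewrite mem_iota add0n ltnS -szM szm leq_addr.
rewrite mem_monos -szM szm addKn eqxx /=; apply/allP => y.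
rewrite in_mset msetE2 msetnE subn_gt0; case: eqP => [-> | ne]; first by rewrite ltnn.
by rewrite -in_mset => /MS; rewrite in_fset1U => /orP[/eqP/ne|].
Qed.

Lemma count_mask_negb (s : seq I) (bs : seq bool) a : size bs = size s ->
  (count_mem a (mask bs s) + count_mem a (mask (map negb bs) s))%N = count_mem a s.
Proof.
elim: s bs => [|y s IH] [|[] bs] //= [/IH <-]; first by rewrite addnA.
by rewrite addnCA.
Qed.

Lemma mask_seq_mset (s : seq I) A : (forall a, A a <= count_mem a s)%N ->
  exists2 bs : seq bool, size bs = size s & seq_mset (mask bs s) = A.
Proof.
elim: s A => [|y s IH] A le.
  exists [::] => //; apply/msetP => a.
  by rewrite mset_seqE; apply/esym/eqP; rewrite -leqn0 le.
have [Ay0|Ay] := posnP (A y).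
  have [bs sz <-] : exists2 bs : seq bool, size bs = size s & seq_mset (mask bs s) = A.
    apply: IH => a; have /= := le a.
    by case: (eqVneq y a) => [<-|_]; rewrite ?Ay0.
  by exists (false :: bs); rewrite /= ?sz.
have [bs sz eA] : exists2 bs : seq bool, size bs = size s &
    seq_mset (mask bs s) = msetB A (msetn 1 y).
  apply: IH => a; rewrite msetE2 msetnE; have /= := le a.
  by case: (eqVneq a y) => [->|_]; rewrite ?eqxx ?add1n ?leq_subLR // subn0.
exists (true :: bs); rewrite /= ?sz //; apply/msetP => a.
rewrite mset_seqE /= -mset_seqE eA msetE2 msetnE.
by case: (eqVneq a y) => [->|_]; rewrite ?eqxx ?add1n ?subn1 ?prednK // subn0.
Qed.

Lemma mem_msplits m m1 m2 : ((m1, m2) \in msplits m) = (msetD m1 m2 == m).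
Proof.
rewrite /msplits mem_undup; apply/mapP/eqP => [[bs _ [-> ->]]|em].
  apply/msetP => a.
  by rewrite msetE2 !mset_seqE count_mask_negb ?size_tuple // count_mem_mset.
have [bs sz ebs] : exists2 bs : seq bool, size bs = size m & seq_mset (mask bs m) = m1.
  by apply: mask_seq_mset => a; rewrite count_mem_mset -em msetE2 leq_addr.
have szb : size bs == size m by rewrite sz.
exists (Tuple szb); rewrite ?mem_enum //= ebs; congr pair; apply/msetP => a.
have /eqP := count_mask_negb a sz; rewrite -!mset_seqE ebs seq_mset_id -em msetE2.
by rewrite eqn_add2l => /eqP.
Qed.

Lemma sum_finsupp_pick (R : nmodType) m (P : pred I) (M : I -> multiset I) (K : R) s :
  uniq s -> (forall a, 0 < M a a)%N -> (forall a, P a -> a \in m -> a \in s) ->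
  \sum_(a <- finsupp m) (if P a && (m == M a) then K else 0)
  = \sum_(a <- s) (if P a && (m == M a) then K else 0).
Proof.
move=> us Ma Ps; apply: eq_big_nz_uniq; rewrite ?fset_uniq // => a.
case: andP => [[Pa /eqP em] _|]; last by rewrite eqxx.
have am : a \in m by rewrite in_mset em Ma.
by rewrite msuppE am Ps.
Qed.

End Monomials.

Section LinearForms.
Variables (k : fieldType) (J : Type) (c : J -> k).

Definition lform (s : seq J) (f : J -> k) := \sum_(y <- s) f y * c y.

Lemma lform_cons x s f : lform (x :: s) f = f x * c x + lform s f.
Proof. exact: big_cons. Qed.

Lemma lformN s f : lform s (fun p => - f p) = - lform s f.
Proof. by rewrite /lform -sumrN; apply: eq_bigr => y _; rewrite mulNr. Qed.

Definition lcomb (cs : seq (k * (J -> k))) : J -> k := fun p => \sum_(e <- cs) e.1 * e.2 p.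

Lemma lform_lcomb s cs : lform s (lcomb cs) = \sum_(e <- cs) e.1 * lform s e.2.
Proof.
rewrite /lform /lcomb; under eq_bigr do rewrite mulr_suml.
rewrite exchange_big; apply: eq_bigr => e _; rewrite mulr_sumr.
by apply: eq_bigr => y _; rewrite mulrA.
Qed.

End LinearForms.

Section PolynomialEvaluation.
Variables (k : fieldType) (J : choiceType) (c : J -> k).
Implicit Types (F : fseries k J) (s : seq J).

Definition meval (m : monomial J) := \prod_(i <- enum_mset m) c i.

Lemma mevalD (A B : multiset J) : meval (msetD A B) = meval A * meval B.
Proof. by rewrite /meval (perm_big _ (perm_msetD A B)) big_cat. Qed.

Lemma mevaln n a : meval (msetn n a) = c a ^+ n.
Proof. by rewrite /meval enum_msetn big_nseq; elim: n => //= n ->; rewrite exprS. Qed.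

Definition peval n F s := \sum_(m <- monos n [fset y in s]%fset) F m * meval m.

Definition fshift p x F : fseries k J := fun m => F (msetD (msetn p x) m).

Lemma eq_peval n F G s : F =1 G -> peval n F s = peval n G s.
Proof. by move=> eFG; apply: eq_bigr => m _; rewrite eFG. Qed.

Lemma fshift0 x F : fshift 0 x F =1 F.
Proof. by move=> m; rewrite /fshift msetn0 mset0D. Qed.

Lemma peval_cons n F x s : x \notin s ->
  peval n F (x :: s) = \sum_(p < n.+1) c x ^+ p * peval (n - p) (fshift p x F) s.
Proof.
move=> xs; rewrite /peval.
have -> : [fset y in x :: s]%fset = (x |` [fset y in s])%fset by apply/fsetP => y; rewrite !inE.
rewrite big_monos_fsetU1 ?inE //; apply: eq_bigr => p _; rewrite mulr_sumr.
by apply: eq_bigr => m _; rewrite mevalD mevaln mulrCA mulrA.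
Qed.

Lemma peval_nil n F : peval n F [::] = (n == 0)%:R * F mset0.
Proof.
rewrite /peval (@eq_big_nz_uniq _ _ _ (if n == 0 then [:: mset0] else [::])).
- case: eqP => _; rewrite ?big_seq1 ?big_nil ?mul0r //.
  by rewrite /meval enum_mset0 big_nil mulr1 mul1r.
- exact: undup_uniq.
- by case: eqP.
move=> m _; rewrite mem_monos; case: n => [|n] /=.
  by rewrite size_mset_eq0 inE; case: eqP => // ->; rewrite enum_mset0.
by case: (enum_mset m) => [|u ?] //=; rewrite inE andbF.
Qed.

Lemma peval0 F s : uniq s -> peval 0 F s = F mset0.
Proof.
elim: s F => [|x s IH] F; first by rewrite peval_nil mul1r.
by case/andP => xs us; rewrite peval_cons // big_ord1 mul1r IH // fshift0.
Qed.

Lemma peval1 F s : uniq s -> peval 1 F s = lform c s (fun y => F (msetn 1 y)).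
Proof.
elim: s F => [|x s IH] F; first by rewrite peval_nil mul0r /lform big_nil.
case/andP => xs us; rewrite peval_cons // big_ord_recr big_ord1 /= lform_cons.
rewrite (eq_peval _ _ (fshift0 x F)) IH // peval0 // /fshift msetD0 addrC; ring.
Qed.

Lemma peval2_cons F x s : uniq (x :: s) ->
  peval 2 F (x :: s) =
  peval 2 F s + c x * lform c (x :: s) (fun p => F (msetD (msetn 1 x) (msetn 1 p))).
Proof.
case/andP => xs us; rewrite peval_cons // !big_ord_recr big_ord0 /= add0r mul1r.
rewrite (eq_peval _ _ (fshift0 x F)) peval1 // peval0 // /fshift msetD0 lform_cons.
by rewrite -(msetnD 1 1); ring.
Qed.

Lemma peval3_cons F x s : uniq (x :: s) ->
  peval 3 F (x :: s) = peval 3 F s + c x * peval 2 (fshift 1 x F) s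
    + c x ^+ 2 * lform c (x :: s) (fun p => F (msetD (msetn 2 x) (msetn 1 p))).
Proof.
case/andP => xs us; rewrite peval_cons // !big_ord_recr big_ord0 /= add0r.
rewrite (eq_peval _ _ (fshift0 x F)) peval1 // peval0 // /fshift msetD0 lform_cons.
by rewrite -(msetnD 2 1); ring.
Qed.

Lemma peval_fmul n1 n2 (a b : fseries k J) s : homog n1 a -> homog n2 b ->
  peval (n1 + n2) (fmul a b) s = peval n1 a s * peval n2 b s.
Proof.
move=> ha hb; set S := [fset y in s]%fset.
pose P (p : monomial J * monomial J) := a p.1 * b p.2 * meval (msetD p.1 p.2).
transitivity (\sum_(p <- [seq p | m <- monos (n1 + n2) S, p <- msplits m]) P p).
  rewrite big_allpairs_dep /peval; apply: eq_bigr => m _.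
  rewrite /fmul mulr_suml big_seq [RHS]big_seq; apply: eq_bigr => -[m1 m2].
  by rewrite mem_msplits /P => /eqP ->.
transitivity (\sum_(p <- [seq (m1, m2) | m1 <- monos n1 S, m2 <- monos n2 S]) P p); last first.
  rewrite big_allpairs /peval big_distrlr /=.
  by apply: eq_bigr => m1 _; apply: eq_bigr => m2 _; rewrite /P mevalD mulrACA.
apply: eq_big_nz_uniq.
- apply: allpairs_uniq_dep => [|m _|[m p] [m' p']]; try exact: undup_uniq.
  move=> /allpairsPdep[? [[m1 m2] [_ + [-> ->]]]] /allpairsPdep[? [[m1' m2'] [_ + [-> ->]]]].
  by rewrite !mem_msplits => /eqP <- /eqP <- /= [-> ->].
- by apply: allpairs_uniq; try exact: undup_uniq; move=> -[? ?] [? ?] _ _ [-> ->].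
move=> [m1 m2]; rewrite /P !mulf_eq0 !negb_or => /andP[/andP[am1 bm2] _].
have /eqP sz1 : size (enum_mset m1) == n1 by apply: contraNT am1 => /eqP/ha ->.
have /eqP sz2 : size (enum_mset m2) == n2 by apply: contraNT bm2 => /eqP/hb ->.
apply/allpairsPdep/allpairsP => [[m [p [mM + ep]]]|[[m1' m2'] /= [m1S m2S [-> ->]]]].
  rewrite -ep mem_msplits => /eqP em; move: mM.
  rewrite -em !mem_monos size_msetD sz1 sz2 !eqxx /=.
  rewrite (eq_all_r (perm_mem (perm_msetD _ _))) all_cat => /andP[m1S m2S].
  by exists (m1, m2); split; rewrite /= ?mem_monos ?sz1 ?sz2 ?eqxx.
exists (msetD m1' m2'), (m1', m2'); rewrite mem_msplits eqxx; split => //.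
move: m1S m2S; rewrite !mem_monos size_msetD (eq_all_r (perm_mem (perm_msetD _ _))) all_cat.
by case/andP => /eqP -> -> /andP[/eqP -> ->]; rewrite eqxx.
Qed.

End PolynomialEvaluation.

Lemma feval_ext (k : fieldType) (I : choiceType) n (F : fseries k I) (v : vect k I)
    (S : {fset I}) : (finsupp v `<=` S)%fset -> feval n F v = \sum_(m <- monos n S) F m * meval v m.
Proof.
move=> /fsubsetP sub; apply: eq_big_nz_uniq; rewrite ?undup_uniq // => m.
rewrite mulf_eq0 negb_or => /andP[_]; rewrite prodf_seq_eq0 => /hasPn vm.
have mv a : a \in enum_mset m -> a \in finsupp v by move/vm; rewrite mem_finsupp.
rewrite !mem_monos; congr andb; apply/allP/allP => [|mS a /mv //] mS a am.
by apply/sub/mv.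
Qed.

Lemma closed_field_root (k : closedFieldType) n (x : k) :
  (0 < n)%N -> exists y : k, y ^+ n = x.
Proof.
move=> n_gt0; have /closed_rootP[y] : size ('X^n - x%:P) != 1.
  by rewrite size_XnsubC // eqSS -lt0n.
by rewrite rootE !hornerE subr_eq0 => /eqP; exists y.
Qed.

Section PowerSums.
Variables (k : fieldType) (J : Type) (c : J -> k) (i2 z3 : k).
Hypotheses (i2E : i2 ^+ 2 = -1) (z3E : z3 ^+ 3 * 24%:R = 1) (two_neq0 : 2%:R != 0 :> k).

Definition square_forms (f1 f2 : J -> k) : seq (J -> k) :=
  [:: lcomb [:: (2%:R^-1, f1); (2%:R^-1, f2)];
      lcomb [:: (i2 / 2%:R, f1); (- (i2 / 2%:R), f2)]].

Lemma sum_square_forms s f1 f2 :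
  \sum_(f <- square_forms f1 f2) lform c s f ^+ 2 = lform c s f1 * lform c s f2.
Proof.
rewrite !big_cons big_nil !lform_lcomb !big_cons !big_nil /=.
set u := lform c s f1; set v := lform c s f2.
have four_neq0 : 4%:R != 0 :> k by rewrite (natrM _ 2 2) mulf_neq0.
transitivity (((u + v) ^+ 2 + i2 ^+ 2 * (u - v) ^+ 2) / 4%:R).
  by field; rewrite four_neq0 two_neq0.
by rewrite i2E; field.
Qed.

(* The sign vectors with product 1: (A+B+D)^3 - (A+B-D)^3 - (A-B+D)^3 + (A-B-D)^3 = 24ABD. *)
Definition cube_forms (f1 f2 f3 : J -> k) : seq (J -> k) :=
  [seq lcomb [:: (z3 * e.1.1, f1); (z3 * e.1.2, f2); (z3 * e.2, f3)]
  | e <- [:: (1, 1, 1); (-1, -1, 1); (-1, 1, -1); (1, -1, -1)]].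

Lemma sum_cube_forms s f1 f2 f3 :
  \sum_(f <- cube_forms f1 f2 f3) lform c s f ^+ 3 =
  lform c s f1 * lform c s f2 * lform c s f3.
Proof.
rewrite big_map !big_cons big_nil !lform_lcomb !big_cons !big_nil /=.
set u := lform c s f1; set v := lform c s f2; set w := lform c s f3.
by transitivity (z3 ^+ 3 * 24%:R * (u * v * w)); [ring | rewrite z3E mul1r].
Qed.

End PowerSums.

Section CubicFormVr.
Variables (k : fieldType) (r : nat).
Local Notation V := (Vidx r).

Definition xcoord (t : 'I_r) : V := inl (inl t).
Definition ycoord (t : 'I_r) (j : nat) : V := inl (inr (t, j)).
Definition zcoord (j : nat) : V := inr j.

Definition Vcoords (Y Z : seq nat) : seq V :=
  [seq xcoord t | t <- enum 'I_r] ++ [seq ycoord t j | t <- enum 'I_r, j <- Y] ++ map zcoord Z.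

Lemma mem_Vcoords Y Z (a : V) : (a \in Vcoords Y Z) =
  match a with inl (inl _) => true | inl (inr (_, j)) => j \in Y | inr j => j \in Z end.
Proof.
rewrite !mem_cat; case: a => [[t|[t j]]|j]; first by rewrite map_f ?mem_enum.
  have /negPf -> : ycoord t j \notin [seq xcoord t | t <- enum 'I_r] by apply/mapP => -[].
  have /negPf -> : ycoord t j \notin map zcoord Z by apply/mapP => -[].
  rewrite orbF; apply/allpairsP/idP => [[[? ?] [_ ? [_ ->]]] //|jY].
  by exists (t, j); rewrite mem_enum.
have /negPf -> : zcoord j \notin [seq xcoord t | t <- enum 'I_r] by apply/mapP => -[].
have /negPf -> : zcoord j \notin [seq ycoord t j | t <- enum 'I_r, j <- Y].
  by apply/allpairsP => -[? [_ _ //]].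
by rewrite mem_map // => i i' [].
Qed.

Lemma f_V_Vcoords Y Z (m : multiset V) : uniq Y -> uniq Z ->
  all (fun a => a \in Vcoords Y Z) m ->
  f_V k r m =
  \sum_(t < r) \sum_(j <- Y)
     (if m == msetD (msetn 1 (xcoord t)) (msetn 2 (ycoord t j)) then 3%:R else 0)
  + \sum_(j <- Z) (if m == msetn 3 (zcoord j) then 1 else 0).
Proof.
move=> uY uZ /allP mV; rewrite /f_V; congr (_ + _).
  apply: eq_bigr => t _; rewrite (sum_finsupp_pick _ _ _ (s := map (ycoord t) Y)).
  - by rewrite big_map; apply: eq_bigr => j _; rewrite /= eqxx.
  - by rewrite map_inj_uniq // => i j [].
  - by move=> a; rewrite msetE2 !msetnE eqxx addn2.
  case=> [[//|[t' j]]|//] /= /eqP -> /mV.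
  by rewrite mem_Vcoords => /map_f->.
rewrite (sum_finsupp_pick _ _ _ (s := map zcoord Z)).
- by rewrite big_map.
- by rewrite map_inj_uniq // => i j [].
- by move=> a; rewrite msetnE eqxx.
by case=> // j _ /mV; rewrite mem_Vcoords => /map_f->.
Qed.

Lemma feval_fV (v : vect k V) (Y Z : seq nat) : uniq Y -> uniq Z ->
  {subset finsupp v <= Vcoords Y Z} ->
  feval 3 (f_V k r) v =
  \sum_(t < r) 3%:R * v (xcoord t) * \sum_(j <- Y) v (ycoord t j) ^+ 2
  + \sum_(j <- Z) v (zcoord j) ^+ 3.
Proof.
move=> uY uZ sub; set S := [fset a in Vcoords Y Z]%fset.
rewrite (@feval_ext _ _ 3 _ v S); last by apply/fsubsetP => a /sub aV; rewrite in_fset.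
have inS a : a \in Vcoords Y Z -> a \in S by rewrite in_fset.
rewrite big_seq; under eq_bigr => m.
  rewrite mem_monos => /andP[_ /allP mS].
  rewrite (f_V_Vcoords uY uZ); last by apply/allP => a /mS; rewrite in_fset.
  over.
rewrite -big_seq; under eq_bigr do rewrite mulrDl; rewrite big_split /=; congr (_ + _).
  under eq_bigr do rewrite mulr_suml; rewrite exchange_big; apply: eq_bigr => t _.
  under eq_bigr do rewrite mulr_suml.
  rewrite exchange_big mulr_sumr; apply: eq_big_seq => j jY.
  under eq_bigr do rewrite (fun_if (fun x => x * _)) mul0r.
  rewrite sum_pick_uniq ?undup_uniq ?mevalD ?mevaln ?expr1 ?mulrA //.
  rewrite mem_monos size_msetD !size_msetn /= (eq_all_r (perm_mem (perm_msetD _ _))).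
  by rewrite all_cat !enum_msetn /= !inS ?mem_Vcoords //=.
under eq_bigr do rewrite mulr_suml; rewrite exchange_big; apply: eq_big_seq => j jZ.
under eq_bigr do rewrite (fun_if (fun x => x * _)) mul0r mul1r.
rewrite sum_pick_uniq ?undup_uniq ?mevaln //.
by rewrite mem_monos size_msetn enum_msetn /= inS ?mem_Vcoords //=.
Qed.

End CubicFormVr.

Arguments zcoord {r} j.
Arguments Vcoords {r} Y Z.

Section TriangularDecomposition.
Variables (k : fieldType) (J : countType) (r : nat).
Variables (g : fseries k J) (Q : 'I_r -> fseries k J) (C : J -> 'I_r -> k).
Variables (n : J -> nat) (a b : J -> nat -> fseries k J).
Hypothesis fderiv_decomp : forall x m,
  fderiv g x m = \sum_(t < r) C x t * Q t m + \sum_(i < n x) fmul (a x i) (b x i) m.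
Hypotheses (a_homog : forall x i, homog 1 (a x i)) (b_homog : forall x i, homog 1 (b x i)).

Local Notation pk := (@choice.pickle J).
Local Notation lt_pickle := (relpre pk ltn).

Definition above (y : J) (s : seq J) := [seq p <- s | (pk y <= pk p)%N].

Definition delta (y : J) : J -> k := fun p => (p == y)%:R.
Definition Cform (t : 'I_r) : J -> k := fun p => C p t.
Definition Qrow (t : 'I_r) (y : J) : J -> k := fun p => Q t (msetD (msetn 1 y) (msetn 1 p)).

(* The monomials of g with least variable y, once sum_t C_{y,t} Q_t is moved out of d_y g into
   the global sum_t (sum_p C_{p,t} c_p) Q_t, add up to c_y times the sum over these pairs of
   products of linear forms in the c_p with p >= y ([stage] below). *)
Definition stage_pairs (y : J) : seq ((J -> k) * (J -> k)) :=
  (delta y, fun p => g (msetD (msetn 2 y) (msetn 1 p)))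
  :: [seq (fun p => (p != y)%:R * a y i (msetn 1 p), fun p => (p != y)%:R * b y i (msetn 1 p))
     | i : 'I_(n y) <- index_enum 'I_(n y)]
  ++ [seq (Cform t, fun p => - Qrow t y p) | t <- index_enum 'I_r].

Variable c : J -> k.
Local Notation L := (lform c).

Definition stage (s : seq J) (y : J) :=
  L s (delta y) * \sum_(e <- stage_pairs y) L s e.1 * L s e.2.

Lemma lform_delta s y : uniq s -> L s (delta y) = (y \in s)%:R * c y.
Proof.
move=> us; rewrite /lform /delta; case: (boolP (y \in s)) => ys.
  rewrite (bigD1_seq y) //= eqxx !mul1r big1 ?addr0 // => p /negPf ->.
  by rewrite mul0r.
by rewrite mul0r big1_seq // => p /andP[_ ps]; rewrite (negPf (memPn ys p ps)) mul0r.
Qed.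

Lemma lform_delta_above s y : y \notin s -> L (above y s) (delta y) = 0.
Proof.
move=> ys; rewrite /lform big1_seq // => p /andP[_].
by rewrite mem_filter /delta => /andP[_ ps]; rewrite (negPf (memPn ys p ps)) mul0r.
Qed.

Lemma stage_notin s y : y \notin s -> stage (above y s) y = 0.
Proof. by move=> ys; rewrite /stage lform_delta_above ?mul0r. Qed.

Lemma sorted_pickle_cons x s : sorted lt_pickle (x :: s) ->
  [/\ sorted lt_pickle s, uniq (x :: s), above x (x :: s) = x :: s
     & {in s, forall y, above y (x :: s) = above y s}].
Proof.
have lt_trans : transitive lt_pickle by move=> y ? ?; apply: ltn_trans.
move=> /[dup] /(sorted_uniq lt_trans (fun y => ltnn _)) us.
rewrite /= path_sortedE // => /andP[/allP x_lt srt]; split => //.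
  by rewrite /above /= leqnn; congr cons; apply/all_filterP/allP => y /x_lt /ltnW.
by move=> y /x_lt /= xy; rewrite /above /= leqNgt xy.
Qed.

Lemma peval2_fshift1 x s : uniq s -> x \notin s ->
  peval c 2 (fshift 1 x g) s = \sum_(t < r) C x t * peval c 2 (Q t) s
    + \sum_(i < n x) L s (fun p => a x i (msetn 1 p)) * L s (fun p => b x i (msetn 1 p)).
Proof.
move=> us xs; have -> : peval c 2 (fshift 1 x g) s = peval c 2 (fun m =>
    \sum_(t < r) C x t * Q t m + \sum_(i < n x) fmul (a x i) (b x i) m) s.
  rewrite /peval !big_seq; apply: eq_bigr => m; rewrite mem_monos => /andP[_ /allP ms].
  have mx : m x = 0%N by apply/mset_eq0P/negP => /ms; rewrite in_fset; exact/negP.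
  by rewrite -fderiv_decomp /fderiv mx mul1r.
rewrite /peval; under eq_bigr do rewrite mulrDl !mulr_suml.
rewrite big_split /=; congr (_ + _); rewrite exchange_big /=; apply: eq_bigr => i _.
  by rewrite mulr_sumr; apply: eq_bigr => m _; rewrite mulrA.
by have := peval_fmul c s (a_homog x i) (b_homog x i); rewrite !peval1 // => <-.
Qed.

Lemma peval2_triangular t s : sorted lt_pickle s ->
  peval c 2 (Q t) s = \sum_(y <- s) L (above y s) (delta y) * L (above y s) (Qrow t y).
Proof.
elim: s => [|x s IH]; first by rewrite peval_nil big_nil mul0r.
case/sorted_pickle_cons => srt us ax ay.
rewrite peval2_cons // IH // big_cons ax lform_delta // mem_head mul1r addrC.
by congr (_ + _); apply: eq_big_seq => y /ay ->.
Qed.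

Lemma peval3_triangular s : sorted lt_pickle s ->
  peval c 3 g s =
  \sum_(t < r) L s (Cform t) * peval c 2 (Q t) s + \sum_(y <- s) stage (above y s) y.
Proof.
elim: s => [|x s IH].
  by rewrite peval_nil mul0r big_nil addr0 big1 // => t _; rewrite /lform big_nil mul0r.
case/sorted_pickle_cons => srt /[dup] us /andP[xs us'] ax ay.
rewrite peval3_cons // peval2_fshift1 // IH // big_cons ax.
rewrite [X in _ = _ + (_ + X)](eq_big_seq (fun y => stage (above y s) y)).
  2: by move=> y /ay ->.
under [X in _ = X + _]eq_bigr do rewrite peval2_cons // lform_cons.
have strict (h : J -> k) : L (x :: s) (fun p => (p != x)%:R * h p) = L s h.
  rewrite lform_cons eqxx !mul0r add0r; apply: eq_big_seq => p ps.
  by rewrite (_ : p != x) ?mul1r //; apply: contraNneq xs => <-.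
rewrite /stage lform_delta // mem_head mul1r big_cons big_cat !big_map /=.
under [X in _ = _ + (_ * (_ + (X + _)) + _)]eq_bigr do rewrite !strict.
rewrite lform_delta // mem_head mul1r.
under [X in _ = _ + (_ * (_ + (_ + X)) + _)]eq_bigr do rewrite lform_cons lformN.
set P := fun t => peval c 2 (Q t) s; set R := fun t => L (x :: s) (Qrow t x).
have -> : \sum_(t < r) (Cform t x * c x + L s (Cform t)) * (P t + c x * R t) =
    \sum_(t < r) L s (Cform t) * P t + c x * \sum_(t < r) C x t * P t
    + c x * \sum_(t < r) (Cform t x * c x + L s (Cform t)) * R t.
  by rewrite !mulr_sumr -!big_split; apply: eq_bigr => t _ /=; rewrite /Cform; ring.
rewrite [X in _ = _ + (_ * (_ + (_ + X)) + _)]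
  (_ : _ = - \sum_(t < r) (Cform t x * c x + L s (Cform t)) * R t); first by ring.
by rewrite -sumrN; apply: eq_bigr => t _; rewrite mulrN.
Qed.

End TriangularDecomposition.

Arguments delta {k J} y p.

Section PickleIndex.
Variables (k : fieldType) (J : countType).
Local Notation pk := (@choice.pickle J).

Definition below (A : nat) : seq J := pmap (@choice.pickle_inv J) (iota 0 A.+1).

Lemma mem_below A y : (y \in below A) = (pk y <= A)%N.
Proof.
rewrite mem_pmap; apply/mapP/idP => [[m mA Ey]|le].
  by move: mA; rewrite mem_iota ltnS; have := @pickle_invK J m; rewrite -Ey => /= ->.
by exists (pk y); rewrite ?pickleK_inv // mem_iota.
Qed.

Lemma uniq_below A : uniq (below A).
Proof. apply: pmap_uniq; [exact: pickle_invK | exact: iota_uniq]. Qed.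

Lemma big_below A s (F : J -> k) : uniq s -> {in s, forall y, pk y <= A}%N ->
  (forall y, y \notin s -> F y = 0) -> \sum_(y <- below A) F y = \sum_(y <- s) F y.
Proof.
move=> us sA F0; apply: eq_big_nz_uniq (uniq_below A) us _.
move=> y Fy; have ys : y \in s by apply: contraNT Fy => /F0 ->; rewrite eqxx.
by rewrite mem_below sA ys.
Qed.

Lemma sorted_pickle_sort (S : {fset J}) : sorted (relpre pk ltn) (sort (relpre pk leq) S).
Proof.
rewrite -sorted_map ltn_sorted_uniq_leq map_inj_uniq ?sort_uniq ?fset_uniq ?sorted_map //=.
  by apply: sort_sorted => y y'; exact: leq_total.
exact: pcan_inj (@pickleK_inv J).
Qed.

Definition pindex (sz : J -> nat) A :=
  [seq choice.pickle (y, i) | y <- below A, i <- iota 0 (sz y)].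

Lemma uniq_pindex sz A : uniq (pindex sz A).
Proof.
apply: allpairs_uniq_dep => [|y _|[y i] [y' i'] _ _ /=]; [exact: uniq_below | exact: iota_uniq |].
by move/(pcan_inj (@pickleK_inv _)) => [-> ->].
Qed.

(* The coordinate [pickle (y, i)] carries the [i]-th form of [fs y], restricted to the [p] with
   [pk p >= pk y]. *)
Definition tri_coord (fs : J -> seq (J -> k)) (j : nat) (p : J) : k :=
  if @choice.pickle_inv (J * nat)%type j is Some (y, i) then
    if (pk y <= pk p)%N then nth (fun=> 0) (fs y) i p else 0
  else 0.

Lemma tri_coord_supp fs A j p : (pk p <= A)%N -> tri_coord fs j p != 0 ->
  j \in pindex (fun y => size (fs y)) A.
Proof.
rewrite /tri_coord => pA; case E: (choice.pickle_inv j) => [[y i]|]; last by rewrite eqxx.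
have <- : choice.pickle (y, i) = j by have := @pickle_invK (J * nat)%type j; rewrite E.
case: leqP => [yp nz|_]; last by rewrite eqxx.
apply: allpairs_f_dep; first by rewrite mem_below (leq_trans yp pA).
by rewrite mem_iota /=; apply: contraNT nz; rewrite -leqNgt => /(nth_default _) ->.
Qed.

Lemma sum_tri_coord (c : J -> k) fs s y e :
  \sum_(i <- iota 0 (size (fs y)))
     (\sum_(p <- s) tri_coord fs (choice.pickle (y, i)) p * c p) ^+ e
  = \sum_(f <- fs y) lform c (above y s) f ^+ e.
Proof.
rewrite [RHS](big_nth (fun=> 0)) /index_iota subn0; apply: eq_bigr => i _; congr (_ ^+ e).
rewrite /tri_coord pickleK_inv /lform big_filter [RHS]big_mkcond; apply: eq_bigr => p _.
by case: ifP; rewrite ?mul0r.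
Qed.

End PickleIndex.

Section Embedding.
Variables (k : fieldType) (J : countType) (r : nat).
Variables (g : fseries k J) (Q : 'I_r -> fseries k J) (C : J -> 'I_r -> k).
Variables (n : J -> nat) (a b : J -> nat -> fseries k J).
Hypothesis fderiv_decomp : forall x m,
  fderiv g x m = \sum_(t < r) C x t * Q t m + \sum_(i < n x) fmul (a x i) (b x i) m.
Hypotheses (a_homog : forall x i, homog 1 (a x i)) (b_homog : forall x i, homog 1 (b x i)).
Variables (i2 z3 : k).
Hypotheses (i2E : i2 ^+ 2 = -1) (z3E : z3 ^+ 3 * 24%:R = 1).
Hypotheses (two_neq0 : 2%:R != 0 :> k) (three_neq0 : 3%:R != 0 :> k).
Local Notation pk := (@choice.pickle J).

Definition ysquares (t : 'I_r) (y : J) := square_forms i2 (delta y) (Qrow Q t y).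
Definition zcubes (y : J) :=
  flatten [seq cube_forms z3 (delta y) e.1 e.2 | e <- stage_pairs g Q C n a b y].

Definition yindex := pindex (fun _ : J => 2%N).
Definition zindex := pindex (fun y => size (zcubes y)).

Definition coord (p : J) (v : Vidx r) : k :=
  match v with
  | inl (inl t) => C p t / 3%:R
  | inl (inr (t, j)) => tri_coord (ysquares t) j p
  | inr j => tri_coord zcubes j p
  end.

Definition embed (p : J) : vect k (Vidx r) :=
  [fsfun v in [fset v in Vcoords (yindex (pk p)) (zindex (pk p))]%fset => coord p v].

Lemma sum_zcubes c s y :
  \sum_(f <- zcubes y) lform c s f ^+ 3 = stage g Q C n a b c s y.
Proof.
rewrite big_flatten big_map /stage mulr_sumr; apply: eq_bigr => e _.
by rewrite sum_cube_forms // mulrA.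
Qed.

Lemma coord_supp A p v : (pk p <= A)%N -> coord p v != 0 ->
  v \in Vcoords (yindex A) (zindex A).
Proof.
by rewrite mem_Vcoords; case: v => [[t|[t j]]|j] // /tri_coord_supp; apply.
Qed.

Lemma linmap_embedE w v : linmap embed w v = \sum_(j <- finsupp w) w j * coord j v.
Proof.
have embedE p : embed p v = coord p v.
  rewrite fsfun_fun in_fset; case: ifP => // /negbT vp; apply/esym/eqP.
  by apply: contraNT vp; exact: coord_supp.
rewrite /linmap fsfun_fun; case: ifP => [_|vw]; first by under eq_bigr do rewrite embedE.
apply/esym; rewrite big_seq big1 // => j jw; rewrite -embedE.
case: (finsuppP (embed j) v) => [_|vj]; first by rewrite mulr0.
by move: vw; rewrite (fsubsetP (@bigfcup_sup _ _ _ j xpredT (fun i => finsupp (embed i)) jw _)).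
Qed.

Lemma finsupp_linmap_embed w A : {in finsupp w, forall j, pk j <= A}%N ->
  {subset finsupp (linmap embed w) <= Vcoords (yindex A) (zindex A)}.
Proof.
move=> wA v; rewrite mem_finsupp linmap_embedE => nz.
have /hasP[j jw] : has (fun j => coord j v != 0) (finsupp w).
  apply: contraR nz => /hasPn h; rewrite big1_seq // => j /andP[_ /h /negPn/eqP ->].
  by rewrite mulr0.
exact: coord_supp (wA j jw).
Qed.

Lemma feval_embed w : feval 3 (f_V k r) (linmap embed w) = feval 3 g w.
Proof.
pose s := sort (relpre pk leq) (finsupp w); pose A := \max_(j <- s) pk j.
have mem_s : s =i finsupp w by move=> y; rewrite mem_sort.
have us : uniq s by rewrite sort_uniq fset_uniq.
have le_A : {in s, forall y, pk y <= A}%N by move=> y ys; exact: leq_bigmax_seq.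
have linE v : linmap embed w v = \sum_(j <- s) coord j v * w j.
  rewrite linmap_embedE (perm_big s); last by rewrite perm_sym perm_sort.
  by apply: eq_bigr => j _; rewrite mulrC.
rewrite (@feval_fV _ _ _ (yindex A) (zindex A) (uniq_pindex _ A) (uniq_pindex _ A)); last first.
  by apply: finsupp_linmap_embed => j; rewrite -mem_s; exact: le_A.
have X t : linmap embed w (xcoord t) = lform w s (Cform C t) / 3%:R.
  by rewrite linE /lform mulr_suml; apply: eq_bigr => j _; rewrite /= mulrAC.
have Y t : \sum_(j <- yindex A) linmap embed w (ycoord t j) ^+ 2 = peval w 2 (Q t) s.
  rewrite big_allpairs_dep; under eq_bigr do under eq_bigr do rewrite linE.
  under eq_bigr do rewrite (sum_tri_coord w (ysquares t)) sum_square_forms //.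
  rewrite peval2_triangular ?sorted_pickle_sort //.
  by apply: big_below => // y ys; rewrite lform_delta_above ?mul0r.
have Z : \sum_(j <- zindex A) linmap embed w (zcoord j) ^+ 3 =
    \sum_(y <- s) stage g Q C n a b w (above y s) y.
  rewrite big_allpairs_dep; under eq_bigr do under eq_bigr do rewrite linE.
  under eq_bigr do rewrite (sum_tri_coord w zcubes) sum_zcubes.
  by apply: big_below => // y ys; rewrite stage_notin.
rewrite Z; under eq_bigr do rewrite X Y (mulrC 3%:R) divfK //.
rewrite -peval3_triangular ?sorted_pickle_sort //; congr (\sum_(m <- monos 3 _) _).
by apply/fsetP => y; rewrite in_fset mem_s.
Qed.

End Embedding.

Lemma strength2_decomp (k : fieldType) (J : choiceType) (h : fseries k J) s :
  strength_le 2 h s -> exists a b : nat -> fseries k J,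
    (forall i, homog 1 (a i) /\ homog 1 (b i)) /\
    forall m, h m = \sum_(i < s) fmul (a i) (b i) m.
Proof.
case=> a [b [da [db [deg ->]]]].
pose ext (f : 'I_s -> fseries k J) i := if insub i is Some t then f t else fun=> 0.
exists (ext a), (ext b); split => [i|m]; last by apply: eq_bigr => i _; rewrite /ext valK.
rewrite /ext; case: insubP => [t _ _|_] //.
by have [/andP[+ +] /andP[+ +] _] := deg t; case: (da t) => [|[]] //; case: (db t) => [|[]].
Qed.

Lemma rrk_le_fderiv (k : fieldType) (J : choiceType) (g : fseries k J) r : rrk_le g r ->
  exists (Q : 'I_r -> fseries k J) (C : J -> 'I_r -> k) (n : J -> nat)
         (a b : J -> nat -> fseries k J),
  [/\ forall x i, homog 1 (a x i), forall x i, homog 1 (b x i)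
    & forall x m,
      fderiv g x m = \sum_(t < r) C x t * Q t m + \sum_(i < n x) fmul (a x i) (b x i) m].
Proof.
case=> Q [_ H].
have /choice[D HD] : forall x,
    exists d : ('I_r -> k) * nat * (nat -> fseries k J) * (nat -> fseries k J),
    [/\ forall i, homog 1 (d.1.2 i), forall i, homog 1 (d.2 i)
      & forall m, fderiv g x m =
          \sum_(t < r) d.1.1.1 t * Q t m + \sum_(i < d.1.1.2) fmul (d.1.2 i) (d.2 i) m].
  move=> x; have [cx [s /strength2_decomp[a [b [ab E]]]]] := H x.
  exists (cx, s, a, b); split => [i|i|m] /=; [by case: (ab i) | by case: (ab i) |].
  by rewrite -E subrKC.
exists Q, (fun x => (D x).1.1.1), (fun x => (D x).1.1.2), (fun x => (D x).1.2).
exists (fun x => (D x).2).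
by split => x; case: (HD x).
Qed.

Theorem lemma5p3 (k : closedFieldType)
    (hchar2 : ~~ (2%N \in [pchar k])) (hchar3 : ~~ (3%N \in [pchar k]))
    (r : nat) (J : countType) (g : fseries k J)
    (hg : homog 3 g) (hrrk : rrk_le g r) :
  cubic_embeds g (f_V k r).
Proof.
move: hchar2 hchar3; rewrite !inE /= => two_neq0 three_neq0.
have [i2 i2E] := imaginary_exists k.
have [z3 z3E] : exists z3 : k, z3 ^+ 3 * 24%:R = 1.
  have n24 : 24%:R != 0 :> k by rewrite (natrM _ 8 3) (natrM _ 4 2) (natrM _ 2 2) !mulf_neq0.
  have [z zE] := closed_field_root (24%:R^-1 : k) (isT : (0 < 3)%N).
  by exists z; rewrite zE mulVf.
have [Q [C [n [a [b [a_homog b_homog dg]]]]]] := rrk_le_fderiv hrrk.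
by exists (embed g Q C n a b i2 z3) => w; apply: feval_embed.
Qed.
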